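(* Let $P,Q,R\in\mathbb P_d$, $U_P:=\operatorname{Pol}(P^{1/2}R^{1/2})$, $U_Q:=\operatorname{Pol}(Q^{1/2}R^{1/2})$, and let $|\Omega\rangle:=\sum_{i=1}^d|i\rangle\otimes|i\rangle\in\mathbb C^d\otimes\mathbb C^d$. Define the purifications $|P_{U_P^\top}\rangle:=(P^{1/2}\otimes U_P^\top)|\Omega\rangle$ and $|Q_{U_Q^\top}\rangle:=(Q^{1/2}\otimes U_Q^\top)|\Omega\rangle$ (so that the partial trace over the second factor of $|P_{U_P^\top}\rangle\langle P_{U_P^\top}|$ is $P$, and similarly for $Q$). Then $$\operatorname{F}_R(P,Q)=\big\langle P_{U_P^\top},\,Q_{U_Q^\top}\big\rangle,$$ where the inner product is conjugate-linear in the first argument.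
   Context: $\mathbb P_d$ is the set of $d\times d$ complex positive definite matrices; $\operatorname{Pol}(M):=M(M^*M)^{-1/2}$ is the unitary polar factor of an invertible $M$, and $^\top$ denotes transpose in the standard basis. The generalized fidelity is $\operatorname{F}_R(P,Q):=\operatorname{Tr}\big[\sqrt{R^{1/2}PR^{1/2}}\,R^{-1}\sqrt{R^{1/2}QR^{1/2}}\big]$. *)

(* Scalars: an arbitrary numClosedFieldType C
   (algebraically closed field with conjugation and partial order, e.g. the
   complex numbers). *)
From HB Require Import structures.
From mathcomp Require Import all_boot all_order all_algebra.
From mathcomp Require Import mxtens.
From Stdlib Require Import ClassicalEpsilon.
Set Implicit Arguments. Unset Strict Implicit. Unset Printing Implicit Defensive.
Import Order.TTheory GRing.Theory Num.Theory.
Local Open Scope ring_scope.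

Section Defs.
Variable C : numClosedFieldType.

Definition adjmx {m n : nat} (A : 'M[C]_(m, n)) : 'M[C]_(n, m) :=
  (map_mx Num.conj A)^T.

Definition hermitian {d : nat} (A : 'M[C]_d) : Prop := adjmx A = A.

Definition posdef {d : nat} (A : 'M[C]_d) : Prop :=
  hermitian A /\ forall v : 'cV[C]_d, v != 0 -> 0 < (adjmx v *m A *m v) ord0 ord0.

Definition possemidef {d : nat} (A : 'M[C]_d) : Prop :=
  hermitian A /\ forall v : 'cV[C]_d, 0 <= (adjmx v *m A *m v) ord0 ord0.

(* the positive semidefinite square root A^{1/2}: the (unique) PSD S with
   S S = A (chosen by classical choice; 0 if no such S exists) *)
Definition msqrt {d : nat} (A : 'M[C]_d) : 'M[C]_d :=
  epsilon (inhabits 0) (fun S : 'M[C]_d => possemidef S /\ S *m S = A).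

Definition Pol {d : nat} (M : 'M[C]_d) : 'M[C]_d :=
  M *m invmx (msqrt (adjmx M *m M)).

Definition fidR {d : nat} (R P Q : 'M[C]_d) : C :=
  let R12 := msqrt R in
  \tr (msqrt (R12 *m P *m R12) *m invmx R *m msqrt (R12 *m Q *m R12)).

Definition Omega (d : nat) : 'cV[C]_(d * d) :=
  \sum_(i < d) tensmx (delta_mx i ord0 : 'cV[C]_d) (delta_mx i ord0 : 'cV[C]_d).

Definition inner {n : nat} (x y : 'cV[C]_n) : C := (adjmx x *m y) ord0 ord0.

End Defs.

From Pilot Require Import Defs.
From HB Require Import structures.
From mathcomp Require Import all_boot all_order all_algebra.
From mathcomp Require Import mxtens spectral.
From Stdlib Require Import ClassicalEpsilon.
Set Implicit Arguments. Unset Strict Implicit. Unset Printing Implicit Defensive.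
Import Order.TTheory GRing.Theory Num.Theory.
Local Open Scope ring_scope.

(* Write M_P := P^{1/2} R^{1/2} and M_Q := Q^{1/2} R^{1/2}.  The polar
   decomposition gives |M_P| = U_P^* M_P and |M_Q| = M_Q^* U_Q, and
   R^{1/2} R^{-1} R^{1/2} = 1, so F_R(P,Q) = Tr(U_P^* P^{1/2} Q^{1/2} U_Q).
   On the other side (A (x) B)|Omega> is the vectorisation of A B^T, hence
   <(A (x) B) Omega, (X (x) Y) Omega> = Tr(A^* X (B^* Y)^T); for B = U_P^T and
   Y = U_Q^T this is the same trace by cyclicity. *)

Section Adjoint.
Variable C : numClosedFieldType.

Lemma adjmxE m n (A : 'M[C]_(m, n)) : adjmx A = (A ^t* )%sesqui.
Proof. by rewrite /adjmx map_trmx. Qed.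

Lemma adjmxK m n (A : 'M[C]_(m, n)) : adjmx (adjmx A) = A.
Proof. by apply/matrixP=> i j; rewrite !mxE conjCK. Qed.

Lemma adjmx0 m n : adjmx (0 : 'M[C]_(m, n)) = 0.
Proof. by rewrite /adjmx map_mx0 trmx0. Qed.

Lemma adjmxM m n p (A : 'M[C]_(m, n)) (B : 'M[C]_(n, p)) :
  adjmx (A *m B) = adjmx B *m adjmx A.
Proof. by rewrite /adjmx map_mxM trmx_mul. Qed.

Lemma adjmx_inv n (A : 'M[C]_n) : adjmx (invmx A) = invmx (adjmx A).
Proof. by rewrite /adjmx map_invmx trmx_inv. Qed.

Lemma adjmx_tr m n (A : 'M[C]_(m, n)) : adjmx A^T = (adjmx A)^T.
Proof. by rewrite /adjmx -map_trmx. Qed.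

Lemma adjmx_sum m n (I : finType) (F : I -> 'M[C]_(m, n)) :
  adjmx (\sum_i F i) = \sum_i adjmx (F i).
Proof.
apply/matrixP=> i j; rewrite !(mxE, summxE) rmorph_sum.
by apply: eq_bigr => k _; rewrite !mxE.
Qed.

Lemma adjmx_tens m n p q (A : 'M[C]_(m, n)) (B : 'M[C]_(p, q)) :
  adjmx (A *t B) = adjmx A *t adjmx B.
Proof. by rewrite /adjmx map_mxT trmx_tens. Qed.

Lemma adjmx_delta m n (i : 'I_m) (j : 'I_n) :
  adjmx (delta_mx i j : 'M[C]_(m, n)) = delta_mx j i.
Proof. by apply/matrixP=> a b; rewrite !mxE rmorph_nat andbC. Qed.

End Adjoint.

Section Positivity.
Variable C : numClosedFieldType.

Lemma possemidef_diag n (s : 'rV[C]_n) :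
  (forall i, 0 <= s 0 i) -> possemidef (diag_mx s).
Proof.
move=> s_ge0; split.
  apply/matrixP=> i j; rewrite !mxE eq_sym.
  by case: eqP => [->|_]; rewrite ?mulr1n ?geC0_conj ?mulr0n ?conjC0.
move=> v; rewrite mul_mx_diag mxE; apply: sumr_ge0 => k _.
by rewrite !mxE mulrAC mulr_ge0 // mulrC mul_conjC_ge0.
Qed.

Lemma possemidef_congr n (A N : 'M[C]_n) :
  possemidef A -> possemidef (adjmx N *m A *m N).
Proof.
move=> [hA psdA]; split; first by rewrite /Defs.hermitian !adjmxM adjmxK hA mulmxA.
by move=> v; have := psdA (N *m v); rewrite adjmxM !mulmxA.
Qed.

Lemma possemidef_gram n (N : 'M[C]_n) : possemidef (adjmx N *m N).
Proof.
have := possemidef_congr N (@possemidef_diag n (const_mx 1) _).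
by rewrite diag_const_mx mulmx1; apply=> i; rewrite mxE ler01.
Qed.

Lemma posdef_possemidef n (A : 'M[C]_n) : posdef A -> possemidef A.
Proof.
move=> [hA pdA]; split=> // v; have [->|v0] := eqVneq v 0.
  by rewrite mulmx0 mxE.
exact/ltW/pdA.
Qed.

Lemma posdef_unit n (A : 'M[C]_n) : posdef A -> A \in unitmx.
Proof.
move=> [hA pdA]; apply/negPn/negP => Anu.
have /rowV0Pn[u /sub_kermxP uA u0] : kermx A != 0.
  by rewrite kermx_eq0 row_free_unit.
have Au : A *m adjmx u = 0 by rewrite -hA -adjmxM uA adjmx0.
have u'0 : adjmx u != 0.
  by apply: contraNneq u0 => /(congr1 (@adjmx C _ _)); rewrite adjmxK adjmx0 => ->.
by have := pdA _ u'0; rewrite -mulmxA Au mulmx0 mxE ltxx.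
Qed.

End Positivity.

Section SquareRoot.
Variable C : numClosedFieldType.

Lemma possemidef_sqrt_exists n (A : 'M[C]_n) :
  possemidef A -> exists S, possemidef S /\ S *m S = A.
Proof.
move=> [hA psdA].
have Anormal : A \is normalmx by apply/normalmxP; rewrite -!adjmxE hA.
move: (orthomx_spectralP Anormal) (spectral_unitarymx A).
set U := spectralmx A; set s := spectral_diag A => eA Uunitary.
rewrite invmx_unitary // -adjmxE in eA.
have UUa : U *m adjmx U = 1%:M by rewrite adjmxE; apply/unitarymxP.
have s_ge0 i : 0 <= s 0 i.
  have := psdA (adjmx U *m delta_mx i 0).
  rewrite adjmxM adjmx_delta adjmxK eA !mulmxA -(mulmxA _ U) UUa mulmx1.
  by rewrite -(mulmxA _ U) UUa mulmx1 -rowE -colE !mxE eqxx mulr1n.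
pose t := map_mx sqrtC s.
exists (adjmx U *m diag_mx t *m U); split.
  by apply/possemidef_congr/possemidef_diag => i; rewrite mxE sqrtC_ge0.
rewrite !mulmxA -(mulmxA _ U) UUa mulmx1 -(mulmxA (adjmx U)) mulmx_diag.
rewrite eA; congr (_ *m diag_mx _ *m _); apply/rowP => j.
by rewrite !mxE -expr2 sqrtCK.
Qed.

Lemma msqrt_spec n (A : 'M[C]_n) :
  possemidef A -> possemidef (msqrt A) /\ msqrt A *m msqrt A = A.
Proof. by rewrite /msqrt => /possemidef_sqrt_exists/(epsilon_spec (inhabits 0)). Qed.

Lemma adjmx_msqrt n (A : 'M[C]_n) : possemidef A -> adjmx (msqrt A) = msqrt A.
Proof. by case/msqrt_spec=> [[]]. Qed.

Lemma msqrt_unit n (A : 'M[C]_n) :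
  possemidef A -> A \in unitmx -> msqrt A \in unitmx.
Proof. by move=> /msqrt_spec[_ {1}<-]; rewrite unitmx_mul => /andP[]. Qed.

Lemma msqrt_inv_msqrt n (R : 'M[C]_n) :
  posdef R -> msqrt R *m invmx R *m msqrt R = 1%:M.
Proof.
move=> pdR; have psdR := posdef_possemidef pdR; have Ru := posdef_unit pdR.
have [_ SS] := msqrt_spec psdR; have Su := msqrt_unit psdR Ru.
by rewrite -[LHS](mulmxK Su) -(mulmxA (_ *m invmx R)) SS mulmxKV // mulmxV.
Qed.

End SquareRoot.

Section Polar.
Variable C : numClosedFieldType.
Variable n : nat.
Implicit Types M N P : 'M[C]_n.

Lemma msqrt_gram_unit M : M \in unitmx -> msqrt (adjmx M *m M) \in unitmx.
Proof.
move=> Mu; apply: msqrt_unit; first exact: possemidef_gram.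
by rewrite unitmx_mul Mu andbT unitmx_tr map_unitmx.
Qed.

Lemma adjmx_Pol_mul M : M \in unitmx -> adjmx (Pol M) *m M = msqrt (adjmx M *m M).
Proof.
move=> /msqrt_gram_unit; have [[hS _] SS] := msqrt_spec (possemidef_gram M).
rewrite /Pol; set S := msqrt _ in hS SS * => Su.
by rewrite adjmxM adjmx_inv hS -mulmxA -SS mulKmx.
Qed.

Lemma adjmx_mul_Pol M : M \in unitmx -> adjmx M *m Pol M = msqrt (adjmx M *m M).
Proof.
move=> /msqrt_gram_unit; have [_ SS] := msqrt_spec (possemidef_gram M).
by rewrite /Pol; set S := msqrt _ in SS * => Su; rewrite mulmxA -SS mulmxK.
Qed.

Lemma gram_msqrt_mul P N :
  possemidef P -> adjmx (msqrt P *m N) *m (msqrt P *m N) = adjmx N *m P *m N.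
Proof.
move=> /msqrt_spec[[hS _] SS].
by rewrite adjmxM hS -!mulmxA (mulmxA (msqrt P)) SS.
Qed.

End Polar.

Section MaximallyEntangled.
Variable C : numClosedFieldType.
Variable d : nat.
Implicit Types A B X Y : 'M[C]_d.

Lemma tensmx11E (a b : 'M[C]_1) : (a *t b) 0 0 = a 0 0 * b 0 0.
Proof. by rewrite mxE ![(mxtens_unindex _).1]ord1 ![(mxtens_unindex _).2]ord1. Qed.

Lemma tensmx_form (a b : 'rV[C]_d) (c e : 'cV[C]_d) X Y :
  ((a *t b) *m (X *t Y) *m (c *t e)) 0 0 = (a *m X *m c) 0 0 * (b *m Y *m e) 0 0.
Proof. by rewrite !tensmx_mul tensmx11E. Qed.

Lemma Omega_tens_form X Y :
  (adjmx (Omega C d) *m (X *t Y) *m Omega C d) 0 0 = \tr (X *m Y^T).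
Proof.
rewrite /Omega adjmx_sum !mulmx_suml summxE; apply: eq_bigr => i _.
rewrite mulmx_sumr summxE !mxE; apply: eq_bigr => j _.
rewrite (adjmx_tens (delta_mx i 0 : 'cV_d) (delta_mx i 0 : 'cV_d)) !adjmx_delta.
by rewrite tensmx_form -!rowE -!colE !mxE.
Qed.

Lemma inner_tens_Omega A B X Y :
  inner ((A *t B) *m Omega C d) ((X *t Y) *m Omega C d) =
  \tr (adjmx A *m X *m (adjmx B *m Y)^T).
Proof.
rewrite /inner adjmxM adjmx_tens -mulmxA (mulmxA (_ *t _)) tensmx_mul mulmxA.
exact: Omega_tens_form.
Qed.

End MaximallyEntangled.

Lemma fidR_polarE (C : numClosedFieldType) d (P Q R : 'M[C]_d) :
  posdef P -> posdef Q -> posdef R ->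
  fidR R P Q = \tr (adjmx (Pol (msqrt P *m msqrt R)) *m (msqrt P *m msqrt Q) *m
                    Pol (msqrt Q *m msqrt R)).
Proof.
move=> pdP pdQ pdR.
have psdP := posdef_possemidef pdP; have psdQ := posdef_possemidef pdQ.
have psdR := posdef_possemidef pdR; have hR := adjmx_msqrt psdR.
have R12u := msqrt_unit psdR (posdef_unit pdR).
have gramE A : possemidef A ->
    msqrt R *m A *m msqrt R = adjmx (msqrt A *m msqrt R) *m (msqrt A *m msqrt R).
  by move=> psdA; rewrite gram_msqrt_mul ?hR.
have unitM A : posdef A -> msqrt A *m msqrt R \in unitmx.
  move=> pdA; rewrite unitmx_mul R12u andbT.
  exact: msqrt_unit (posdef_possemidef pdA) (posdef_unit pdA).
rewrite /fidR (gramE P psdP) (gramE Q psdQ).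
rewrite -(adjmx_Pol_mul (unitM P pdP)) -(adjmx_mul_Pol (unitM Q pdQ)).
set UP := Pol (msqrt P *m _); set UQ := Pol (msqrt Q *m _).
rewrite adjmxM hR adjmx_msqrt // !mulmxA; congr (\tr (_ *m _)).
rewrite -!mulmxA; congr (_ *m (_ *m _)).
by rewrite !mulmxA msqrt_inv_msqrt // mul1mx.
Qed.

Theorem mainTheorem17 (C : numClosedFieldType) (d : nat) (P Q R : 'M[C]_d) :
  posdef P -> posdef Q -> posdef R ->
  let UP := Pol (msqrt P *m msqrt R) in
  let UQ := Pol (msqrt Q *m msqrt R) in
  fidR R P Q =
  inner (tensmx (msqrt P) UP^T *m Omega C d) (tensmx (msqrt Q) UQ^T *m Omega C d).
Proof.
move=> pdP pdQ pdR UP UQ.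
rewrite inner_tens_Omega fidR_polarE // -/UP -/UQ; clearbody UP UQ.
rewrite (adjmx_msqrt (posdef_possemidef pdP)) trmx_mul trmxK adjmx_tr trmxK.
by rewrite -[_ *m UQ]mulmxA mxtrace_mulC mulmxA.
Qed.
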